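(* For every $n\ge 1$ and every $w \in S_n$, $\operatorname{dep}(w) = \operatorname{ar}(\phi(w))$.
   Context: For $w\in S_n$, the depth is $\operatorname{dep}(w)=\sum_{i:\,w(i)>i}(w(i)-i)$, i.e. half the total displacement $\sum_{i=1}^n |w(i)-i|$. A Motzkin path of length $n$ is a word $p_1\cdots p_n$ in the letters $U,D,H$ such that the subword formed by the letters $U$ and $D$ is a balanced parenthesization; it is drawn as a lattice path from $(0,0)$ to $(n,0)$ with $U$ a step $(1,1)$, $D$ a step $(1,-1)$, $H$ a step $(1,0)$, never going below height $0$. Its area $\operatorname{ar}(p)$ is the area of the region between the line $y=0$ and the path. The map $\phi\colon S_n\to\{\text{Motzkin paths of length } n\}$ is defined by $\phi(w)=p_1\cdots p_n$ where $p_i=U$ if $w^{-1}(i)>i<w(i)$, $p_i=D$ if $w^{-1}(i)<i>w(i)$, and $p_i=H$ otherwise. *)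

From mathcomp Require Import all_boot all_order all_fingroup all_algebra.
Set Implicit Arguments. Unset Strict Implicit. Unset Printing Implicit Defensive.
Import Order.TTheory GRing.Theory Num.Theory.

(* Positions 1..n of the paper are the ordinals 0..n-1 of 'I_n; depth and
   the comparisons defining phi are invariant under this shift. *)

Definition dep (n : nat) (w : 'S_n) : nat :=
  (\sum_(i < n | (i < w i)%N) (w i - i))%N.

Inductive step := U | D | H.

Definition step_eqb (a b : step) : bool :=
  match a, b with U, U | D, D | H, H => true | _, _ => false end.

Definition stepval (s : step) : int :=
  match s with U => 1 | D => -1 | H => 0 end.

Definition height (p : seq step) (k : nat) : int :=
  \sum_(j < k) stepval (nth H p j).

Definition motzkin (p : seq step) : Prop :=
  (forall k : nat, (k <= size p)%N -> (0 <= height p k)%R) /\ height p (size p) = 0%R.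

(* area between y = 0 and the lattice path: each step (1,h_{j}) -> (1,h_{j+1})
   contributes the trapezoid area (h_j + h_{j+1})/2 *)
Definition area (p : seq step) : rat :=
  \sum_(j < size p) (((height p j + height p j.+1)%:~R) / 2%:R)%R.

Definition phi_step (n : nat) (w : 'S_n) (i : 'I_n) : step :=
  if ((i < (w^-1)%g i)%N && (i < w i)%N) then U
  else if (((w^-1)%g i < i)%N && (w i < i)%N) then D
  else H.

Definition phi (n : nat) (w : 'S_n) : seq step :=
  [seq phi_step w i | i <- enum 'I_n].

From mathcomp Require Import all_boot all_order all_fingroup all_algebra zify.
Import Order.TTheory GRing.Theory Num.Theory.
Set Implicit Arguments. Unset Strict Implicit. Unset Printing Implicit Defensive.

(** The height of phi(w) after k steps is the number of arcs i -> w(i) that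
    cross the cut between positions k-1 and k from left to right: a step at k
    opens such an arc iff k < w(k) and closes one iff w^-1(k) < k.  Summing
    these crossing numbers over all cuts counts each excedance i < w(i)
    exactly w(i) - i times, giving dep(w); on the other side, since the path
    starts and ends at height 0, the trapezoid area is the plain sum of the
    heights. *)

Lemma sum_ord_itv a b m :
  (\sum_(k < m) ((a <= k) && (k < b) : nat))%N = (minn b m - a)%N.
Proof.
elim: m => [|m IHm]; first by rewrite big_ord0; lia.
by rewrite big_ord_recr /= IHm; case: leqP; case: ltnP => /=; lia.
Qed.

Section Crossings.

Variables (n : nat) (w : 'S_n).

Definition crossings (k : nat) : nat :=
  (\sum_(i < n) ((i < k) && (k <= w i) : nat))%N.

Lemma crossings0 : crossings 0 = 0%N.
Proof. by rewrite /crossings big1. Qed.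

Lemma crossings_size : crossings n = 0%N.
Proof. by rewrite /crossings big1 // => i _; rewrite ltn_ord /= leqNgt ltn_ord. Qed.

Lemma crossingsS (k : 'I_n) :
  (crossings k.+1 + ((w^-1)%g k < k) = crossings k + (k < w k))%N.
Proof.
have closing : (((w^-1)%g k < k) : nat) =
               (\sum_(i < n) ((w i == k :> nat) && (i < k)))%N.
  rewrite (bigD1 ((w^-1)%g k)) //= permKV eqxx /= big1 ?addn0 // => i neq_i.
  by case: eqP => // /val_inj wi_k; rewrite -wi_k permK eqxx in neq_i.
have opening : ((k < w k) : nat) =
               (\sum_(i < n) ((i == k :> nat) && (k < w i)))%N.
  rewrite (bigD1 k) //= eqxx /= big1 ?addn0 // => i neq_i.
  by case: eqP => // /val_inj i_k; rewrite i_k eqxx in neq_i.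
rewrite closing opening /crossings -!big_split /=; apply: eq_bigr => i _.
rewrite ltnS; move: (nat_of_ord (w i)) (nat_of_ord i) (nat_of_ord k) => a b c.
by case: (ltngtP b c); case: (ltngtP a c).
Qed.

Lemma stepval_phi_step (k : 'I_n) :
  stepval (phi_step w k) = (Posz (k < w k) - Posz ((w^-1)%g k < k))%R.
Proof.
have fixed_k : ((w^-1)%g k == k :> nat) = (w k == k :> nat).
  by apply/eqP/eqP => /val_inj fix_k; [rewrite -{1}fix_k permKV | rewrite -{1}fix_k permK].
rewrite /phi_step; move: fixed_k.
move: (nat_of_ord (w k)) (nat_of_ord ((w^-1)%g k)) (nat_of_ord k) => a b c.
by case: (ltngtP a c); case: (ltngtP b c).
Qed.

Lemma size_phi : size (phi w) = n.
Proof. by rewrite size_map size_enum_ord. Qed.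

Lemma nth_phi (k : 'I_n) : nth H (phi w) k = phi_step w k.
Proof. by rewrite (nth_map k) ?size_enum_ord // nth_ord_enum. Qed.

Lemma height_phi k : (k <= n)%N -> height (phi w) k = Posz (crossings k).
Proof.
elim: k => [|k IHk] le_k_n; first by rewrite /height big_ord0 crossings0.
rewrite /height big_ord_recr /= -/(height (phi w) k) IHk ?(ltnW le_k_n) //.
rewrite (nth_phi (Ordinal le_k_n)) stepval_phi_step.
move: (congr1 Posz (crossingsS (Ordinal le_k_n))) => /=; rewrite !PoszD.
move: (Posz (crossings k.+1)) (Posz (crossings k)) (Posz (k < w _)) (Posz (_ < k)).
by move=> x y a b; lia.
Qed.

Lemma sum_crossingsS : (\sum_(k < n) crossings k)%N = (\sum_(k < n) crossings k.+1)%N.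
Proof.
transitivity (\sum_(k < n.+1) crossings k)%N.
  by rewrite big_ord_recr /= crossings_size addn0.
by rewrite big_ord_recl /= crossings0 add0n.
Qed.

Lemma dep_crossings : dep w = (\sum_(k < n) crossings k.+1)%N.
Proof.
rewrite /dep big_mkcond /= /crossings exchange_big /=; apply: eq_bigr => i _.
under eq_bigr => k _ do rewrite ltnS.
rewrite sum_ord_itv (minn_idPl (ltnW (ltn_ord (w i)))).
by case: ltnP => // le_wi_i; apply/esym/eqP; rewrite subn_eq0.
Qed.

End Crossings.

Theorem proposition3p2 (n : nat) (w : 'S_n) :
  (0 < n)%N -> ((dep w)%:R : rat) = area (phi w).
Proof.
move=> _; rewrite /area size_phi.
under eq_bigr => j _.
  rewrite !height_phi ?(ltnW (ltn_ord j)) ?ltn_ord // -PoszD.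
  over.
rewrite -mulr_suml -natr_sum big_split /= sum_crossingsS dep_crossings.
by rewrite addnn -muln2 natrM mulfK.
Qed.
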